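(* Let $\mathcal{Z}\subset\mathbb{R}^d$ be an integral, unit-generated lattice, and let $K$ be its Dirichlet region. Then $\partial K$ is contained in the union of the hyperplanes $\{x: x\cdot z=1/2\}$, where $z$ ranges over the elements of $\mathcal{Z}$ of norm $1$.
   Context: A lattice is a discrete additive subgroup of $\mathbb{R}^d$ with compact quotient. Integral: $z\cdot z\in\mathbb{Z}$ for all $z\in\mathcal{Z}$. Unit-generated: every element of $\mathcal{Z}$ is a sum of elements of $\mathcal{Z}$ of Euclidean norm $1$. Dirichlet region: $K=\{x:|x|\le|x-z|\ \forall z\in\mathcal{Z}\}$. *)

(* R : realType, vectors of R^d are row vectors 'rV[R]_d
   (with the product topology from mathcomp-analysis, i.e. the usual topology). *)
From HB Require Import structures.
From mathcomp Require Import all_boot all_order all_algebra.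
From mathcomp Require Import all_classical all_reals all_analysis.
Set Implicit Arguments. Unset Strict Implicit. Unset Printing Implicit Defensive.
Import Order.TTheory GRing.Theory Num.Theory.
Import numFieldNormedType.Exports.
Local Open Scope classical_set_scope.
Local Open Scope ring_scope.

Section Defs.
Variables (R : realType) (d : nat).

Definition dot (x y : 'rV[R]_d) : R := \sum_(i < d) x ord0 i * y ord0 i.
Definition enorm (x : 'rV[R]_d) : R := Num.sqrt (dot x x).

Definition additive_subgroup (Z : set 'rV[R]_d) : Prop :=
  Z 0 /\ (forall x y, Z x -> Z y -> Z (x - y)).
Definition discrete_set (Z : set 'rV[R]_d) : Prop :=
  forall z, Z z -> \forall y \near z, Z y -> y = z.
(* compact quotient R^d / Z : some compact set meets every coset of Z *)
Definition compact_quotient (Z : set 'rV[R]_d) : Prop :=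
  exists C : set 'rV[R]_d, compact C /\ (forall x, exists c z, C c /\ Z z /\ x = c + z).
Definition is_lattice (Z : set 'rV[R]_d) : Prop :=
  [/\ additive_subgroup Z, discrete_set Z & compact_quotient Z].

Definition integral_lattice (Z : set 'rV[R]_d) : Prop :=
  forall z, Z z -> exists n : int, dot z z = n%:~R.

Definition unit_generated (Z : set 'rV[R]_d) : Prop :=
  forall z, Z z -> exists s : seq 'rV[R]_d,
    (forall u, u \in s -> Z u /\ enorm u = 1) /\ z = \sum_(u <- s) u.

Definition dirichlet (Z : set 'rV[R]_d) : set 'rV[R]_d :=
  [set x | forall z, Z z -> enorm x <= enorm (x - z)].

Definition boundary (A : set 'rV[R]_d) : set 'rV[R]_d :=
  closure A `\` interior A.

End Defs.

From HB Require Import structures.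
From mathcomp Require Import all_boot all_order all_algebra.
From mathcomp Require Import all_classical all_reals all_analysis.
From mathcomp Require Import ring lra zify.
Set Implicit Arguments. Unset Strict Implicit. Unset Printing Implicit Defensive.
Import Order.TTheory GRing.Theory Num.Theory.
Import numFieldNormedType.Exports.
Local Open Scope classical_set_scope.
Local Open Scope ring_scope.

(* The Dirichlet region K is cut out by the half-spaces [x . z <= |z|^2 / 2],
   z in Z.  For an integral lattice generated by its unit vectors the unit
   vectors alone suffice: if u, v are unit vectors with u . v < 0, then
   |u + v|^2 = 2 + 2 u . v is an integer in [0, 2), so u + v is 0 or again a
   unit vector.  Merging such pairs writes every z in Z as a sum of n unit
   vectors with pairwise nonnegative products, so that n <= |z|^2, and then
   x . u <= 1/2 for all unit vectors u gives 2 x . z <= n <= |z|^2.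
   The unit vectors of Z are bounded and, by integrality, uniformly discrete,
   hence compact.  At a boundary point x of K the supremum of x . u over them
   is 1/2, since x is a limit both of points of K and of points outside K;
   by compactness it is attained. *)

Section Dot.
Variables (R : realType) (d : nat).
Implicit Types x y z u v : 'rV[R]_d.

Lemma dotC x y : dot x y = dot y x.
Proof. by apply: eq_bigr => i _; rewrite mulrC. Qed.

Lemma dotDl x y z : dot (x + y) z = dot x z + dot y z.
Proof. by rewrite /dot -big_split; apply: eq_bigr => i _; rewrite mxE mulrDl. Qed.

Lemma dotNl x z : dot (- x) z = - dot x z.
Proof. by rewrite /dot -sumrN; apply: eq_bigr => i _; rewrite mxE mulNr. Qed.

Lemma dotBl x y z : dot (x - y) z = dot x z - dot y z.
Proof. by rewrite dotDl dotNl. Qed.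

Lemma dotDr x y z : dot z (x + y) = dot z x + dot z y.
Proof. by rewrite dotC dotDl !(dotC z). Qed.

Lemma dotBr x y z : dot z (x - y) = dot z x - dot z y.
Proof. by rewrite dotC dotBl !(dotC z). Qed.

Lemma dot0r z : dot z 0 = 0.
Proof. by rewrite /dot big1 // => i _; rewrite mxE mulr0. Qed.

Lemma dot_sumr x (s : seq 'rV[R]_d) :
  dot x (\sum_(u <- s) u) = \sum_(u <- s) dot x u.
Proof.
elim: s => [|a s IH]; first by rewrite !big_nil dot0r.
by rewrite !big_cons dotDr IH.
Qed.

Lemma dot_selfD u v : dot (u + v) (u + v) = dot u u + 2 * dot u v + dot v v.
Proof. by rewrite !dotDl !dotDr (dotC v u); ring. Qed.

Lemma dot_self_ge0 x : 0 <= dot x x.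
Proof. by apply: sumr_ge0 => i _; rewrite -expr2 sqr_ge0. Qed.

Lemma dot_self_eq0 x : dot x x = 0 -> x = 0.
Proof.
move=> /eqP; rewrite psumr_eq0 => [/allP x0|i _]; last by rewrite -expr2 sqr_ge0.
apply/rowP => i; have /implyP/(_ isT) := x0 i (mem_index_enum i).
by rewrite mxE mulf_eq0 orbb => /eqP.
Qed.

Lemma enorm_eq1 u : (enorm u = 1) <-> (dot u u = 1).
Proof.
rewrite /enorm; split => [u1|->]; last exact: sqrtr1.
by rewrite -(sqr_sqrtr (dot_self_ge0 u)) u1 expr1n.
Qed.

Lemma enorm_le_enormB y z :
  (enorm y <= enorm (y - z)) = (dot y z <= dot z z / 2).
Proof.
rewrite /enorm ler_sqrt ?dot_self_ge0 // !dotBl !dotBr (dotC z y).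
apply/idP/idP; lra.
Qed.

Lemma normr_coord_le x i : `|x ord0 i| <= `|x|.
Proof.
have /mapP[j _ ->] : `|x ord0 i| \in [seq `|x k.1 k.2| | k : 'I_1 * 'I_d].
  by apply/mapP; exists (ord0, i) => //=; rewrite mem_enum.
by rewrite [leRHS]/Num.Def.normr /= mx_normrE; apply/bigmax_geP; right; exists j.
Qed.

(* [`|x|] is the max-norm of the matrix normed space, hence the factor d. *)
Lemma normr_dot_le x y : `|dot x y| <= d%:R * (`|x| * `|y|).
Proof.
apply: le_trans (ler_norm_sum _ _ _) _.
have -> : d%:R * (`|x| * `|y|) = \sum_(i < d) (`|x| * `|y|).
  by rewrite sumr_const card_ord mulr_natl.
apply: ler_sum => i _.
by rewrite normrM ler_pM ?normr_coord_le.
Qed.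

Lemma normr_le1_dot_self1 u : dot u u = 1 -> `|u| <= 1.
Proof.
move=> u1; rewrite [leLHS]/Num.Def.normr /= mx_normrE.
apply: bigmax_le => // -[i j] _ /=; rewrite (ord1 i).
have : u ord0 j * u ord0 j <= 1.
  by rewrite -u1 /dot (bigD1 j) //= lerDl sumr_ge0 // => k _; rewrite -expr2 sqr_ge0.
by rewrite ler_norml; move=> ?; apply/andP; split; nra.
Qed.

Lemma size_le_dot_self_sum (s : seq 'rV[R]_d) :
  {in s, forall u, dot u u = 1} -> pairwise (fun u v => 0 <= dot u v) s ->
  (size s)%:R <= dot (\sum_(u <- s) u) (\sum_(u <- s) u).
Proof.
elim: s => [|a s IH] s1 /=; first by rewrite big_nil dot0r.
move=> /andP[/allP a_s s_s].
have a1 : dot a a = 1 by apply: s1; rewrite mem_head.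
have := IH (fun u us => s1 u (mem_behead (s := a :: s) us)) s_s.
have : 0 <= \sum_(u <- s) dot a u by rewrite big_seq sumr_ge0.
rewrite big_cons dot_selfD a1 [dot a _]dot_sumr -[(size s).+1]addn1 natrD.
lra.
Qed.

Lemma dot_continuous x : continuous (dot x).
Proof.
move=> v B /nbhs_ballP [e e0 vB].
have k0 : 0 < d%:R * `|x| + 1 :> R by rewrite ltr_wpDl // mulr_ge0.
apply/nbhs_ballP; exists (e / (d%:R * `|x| + 1)); first by rewrite /= divr_gt0.
move=> w; rewrite -ball_normE /= ltr_pdivlMr // => vw.
apply: vB; rewrite -ball_normE /= -dotBr.
apply: le_lt_trans (normr_dot_le _ _) (le_lt_trans _ vw).
have : 0 <= d%:R * `|x| by rewrite mulr_ge0.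
have : 0 <= `|v - w| by [].
nra.
Qed.

End Dot.

Lemma uniformly_discrete_closed (R : realFieldType) (V : normedModType R)
    (A : set V) (r : R) : 0 < r ->
  (forall u v, A u -> A v -> `|u - v| < r -> u = v) -> closed A.
Proof.
move=> r0 Asep y Ay.
have r20 : 0 < r / 2 by rewrite divr_gt0.
have [u [Au yu]] := Ay _ (nbhsx_ballx y _ r20); move: yu; rewrite -ball_normE /= => yu.
have [->//|yNu] := eqVneq y u.
have s0 : 0 < Num.min (r / 2) `|y - u| by rewrite lt_min r20 normr_gt0 subr_eq0.
have [v [Av]] := Ay _ (nbhsx_ballx y _ s0).
rewrite -ball_normE /= lt_min => /andP[yv1 yv2].
suff uv : u = v by rewrite uv ltxx in yv2.
apply: Asep => //.
have -> : u - v = (y - v) - (y - u) by rewrite opprB [RHS]addrC addrA subrK.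
by apply: le_lt_trans (ler_normB _ _) _; rewrite [r]splitr ltrD.
Qed.

Lemma dirichlet_closed (R : realType) (d : nat) (Z : set 'rV[R]_d) :
  closed (dirichlet Z).
Proof.
have -> : dirichlet Z = \bigcap_(z in Z) [set x | dot x z <= dot z z / 2].
  apply/seteqP; split => x xK z Zz /=.
  - by rewrite -enorm_le_enormB; apply: xK.
  - by rewrite enorm_le_enormB; apply: xK.
apply: closed_bigI => z _.
have -> : [set x | dot x z <= dot z z / 2] = dot z @^-1` [set r | r <= dot z z / 2].
  by apply/seteqP; split => x /=; rewrite dotC.
by apply: preimage_closed; [move=> x _; apply: dot_continuous | apply: closed_le].
Qed.

Definition unit_vectors {R : realType} {d : nat} (Z : set 'rV[R]_d) :
  set 'rV[R]_d := [set u | Z u /\ dot u u = 1].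

Section IntegralLattice.
Variables (R : realType) (d : nat) (Z : set 'rV[R]_d).
Hypotheses (Zsub : additive_subgroup Z) (Zint : integral_lattice Z).

Lemma lattice_addr_closed u v : Z u -> Z v -> Z (u + v).
Proof.
case: Zsub => Z0 ZB Zu Zv.
by have := ZB u (0 - v) Zu (ZB _ _ Z0 Zv); rewrite sub0r opprK.
Qed.

Lemma lattice_dot_self_lt2 w : Z w -> dot w w < 2 -> w = 0 \/ dot w w = 1.
Proof.
move=> Zw w2; have [n wn] := Zint Zw.
have : (0 <= n < 2)%R by rewrite -(ler0z R) -(ltr_int R) -wn dot_self_ge0.
move=> /andP[n0 n2]; have [n_0|n_1] : n = 0 \/ n = 1 by lia.
- by left; apply: dot_self_eq0; rewrite wn n_0.
- by right; rewrite wn n_1.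
Qed.

Lemma unit_vectorsD u v : unit_vectors Z u -> unit_vectors Z v ->
  dot u v < 0 -> u + v = 0 \/ unit_vectors Z (u + v).
Proof.
move=> [Zu u1] [Zv v1] uv_lt0; have Zuv := lattice_addr_closed Zu Zv.
have [|->|uv1] := lattice_dot_self_lt2 Zuv; last by right.
- by rewrite dot_selfD u1 v1; lra.
- by left.
Qed.

Lemma unit_sum_shorten s : {in s, forall u, unit_vectors Z u} ->
  ~~ pairwise (fun u v => 0 <= dot u v) s ->
  exists s', [/\ (size s' < size s)%N, {in s', forall u, unit_vectors Z u} &
                 \sum_(u <- s') u = \sum_(u <- s) u].
Proof.
elim: s => [|a s IH] //= s_units.
have Ua : unit_vectors Z a by apply: s_units; rewrite mem_head.
have {}s_units : {in s, forall u, unit_vectors Z u}.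
  by move=> u us; apply: s_units; rewrite in_cons us orbT.
rewrite negb_and => /orP[/allPn [v vs] | /(IH s_units) [s' [ss' s'_units s's]]].
  rewrite -ltNge => av_lt0.
  have sumE : \sum_(u <- s) u = v + \sum_(u <- rem v s) u.
    by rewrite (perm_big _ (perm_to_rem vs)) big_cons.
  have rem_units : {in rem v s, forall u, unit_vectors Z u}.
    by move=> u /mem_rem /s_units.
  have size_rem_lt : (size (rem v s) < size s)%N.
    by rewrite size_rem //; move: vs; rewrite -index_mem; lia.
  have [av0|Uav] := unit_vectorsD Ua (s_units v vs) av_lt0.
    exists (rem v s); split => //; first exact: ltnW.
    by rewrite big_cons sumE addrA av0 add0r.
  exists ((a + v) :: rem v s); split => //.
  - by move=> u; rewrite in_cons => /orP[/eqP -> | /rem_units].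
  - by rewrite !big_cons sumE addrA.
exists (a :: s'); split => //.
- by move=> u; rewrite in_cons => /orP[/eqP -> | /s'_units].
- by rewrite !big_cons s's.
Qed.

Lemma unit_sum_nonobtuse s : {in s, forall u, unit_vectors Z u} ->
  exists s', [/\ {in s', forall u, unit_vectors Z u},
                 pairwise (fun u v => 0 <= dot u v) s' &
                 \sum_(u <- s') u = \sum_(u <- s) u].
Proof.
have [n] := ubnP (size s); elim: n s => // n IH s /ltnSE s_n s_units.
have [s_nonobtuse|s_obtuse] := boolP (pairwise (fun u v => 0 <= dot u v) s).
  by exists s.
have [s' [ss' s'_units <-]] := unit_sum_shorten s_units s_obtuse.
by apply: IH => //; apply: leq_trans ss' s_n.
Qed.

Lemma unit_vectors_compact : compact (unit_vectors Z).
Proof.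
have d1_gt0 : 0 < d%:R + 1 :> R by rewrite ltr_wpDl.
apply: bounded_closed_compact.
  rewrite /= /bounded_near; near=> M => u [_ u1] /=.
  apply: le_trans (normr_le1_dot_self1 u1) _.
  by near: M; apply: nbhs_pinfty_ge.
apply: (@uniformly_discrete_closed _ _ _ (d%:R + 1)^-1); first by rewrite invr_gt0.
move=> u v [Zu _] [Zv _]; rewrite -[_^-1]mul1r ltr_pdivlMr // => uv_small.
have Zuv : Z (u - v) by case: Zsub => _; apply.
have uv_lt1 : dot (u - v) (u - v) < 1.
  apply: le_lt_trans (ler_norm _) (le_lt_trans (normr_dot_le _ _) _).
  have : 0 <= `|u - v| by [].
  have : 0 <= d%:R :> R by [].
  nra.
have uv_lt2 : dot (u - v) (u - v) < 2 by lra.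
have [/eqP|uv1] := lattice_dot_self_lt2 Zuv uv_lt2.
  by rewrite subr_eq0 => /eqP.
by rewrite uv1 ltxx in uv_lt1.
Unshelve. all: by end_near.
Qed.

End IntegralLattice.

Section UnitGeneratedLattice.
Variables (R : realType) (d : nat) (Z : set 'rV[R]_d).
Hypotheses (Zsub : additive_subgroup Z) (Zint : integral_lattice Z)
  (Zunit : unit_generated Z).

Lemma dot_le_half_unit_vectors y z :
  (forall u, unit_vectors Z u -> dot y u <= 1 / 2) -> Z z ->
  dot y z <= dot z z / 2.
Proof.
move=> y_units Zz; have [s0 [s0_units ->]] := Zunit Zz.
have [|s [s_units s_nonobtuse <-]] := unit_sum_nonobtuse Zsub Zint (s := s0).
  by move=> u /s0_units [Zu /enorm_eq1].
have s1 : {in s, forall u, dot u u = 1} by move=> u /s_units[].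
rewrite dot_sumr (le_trans (_ : _ <= (size s)%:R / 2)) //; last first.
  by rewrite ler_pM2r ?invr_gt0 // size_le_dot_self_sum.
rewrite -sum1_size natr_sum mulr_suml big_seq [leRHS]big_seq.
by apply: ler_sum => u us; apply: y_units; apply: s_units.
Qed.

Lemma dirichletP y :
  dirichlet Z y <-> forall u, unit_vectors Z u -> dot y u <= 1 / 2.
Proof.
split => [yK u [Zu u1] | y_units z Zz].
  by have := yK u Zu; rewrite enorm_le_enormB u1.
by rewrite enorm_le_enormB; apply: dot_le_half_unit_vectors.
Qed.

Lemma not_interior_dirichlet x e : ~ interior (dirichlet Z) x -> 0 < e ->
  exists2 u, unit_vectors Z u & 1 / 2 - e < dot x u.
Proof.
move=> xNint e_gt0; have d1_gt0 : 0 < d%:R + 1 :> R by rewrite ltr_wpDl.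
have : ~ (ball x (e / (d%:R + 1)) `<=` dirichlet Z).
  move=> xK; apply: xNint; apply/nbhs_ballP.
  by exists (e / (d%:R + 1)) => //=; rewrite divr_gt0.
move=> /existsNP [y /not_implyP [+ /dirichletP /existsNP [u /not_implyP [Uu]]]].
rewrite -ball_normE /= ltr_pdivlMr // => xy /negP; rewrite -ltNge => yu.
exists u => //.
have : dot y u - dot x u <= d%:R * `|x - y|.
  rewrite -dotBl; apply: le_trans (ler_norm _) (le_trans (normr_dot_le _ _) _).
  by rewrite distrC ler_wpM2l // -[leRHS]mulr1 ler_wpM2l // normr_le1_dot_self1 // Uu.2.
have : 0 <= `|x - y| by [].
nra.
Qed.

End UnitGeneratedLattice.

Theorem lemma4p7 (R : realType) (d : nat) (Z : set 'rV[R]_d) :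
  is_lattice Z -> integral_lattice Z -> unit_generated Z ->
  boundary (dirichlet Z) `<=`
    \bigcup_(z in [set z | Z z /\ enorm z = 1]) [set x | dot x z = 1 / 2].
Proof.
move=> [Zsub _ _] Zint Zunit x [/dirichlet_closed xK xNint].
have x_half := (dirichletP Zsub Zint Zunit x).1 xK.
have x_almost_half := not_interior_dirichlet Zsub Zint Zunit xNint.
have [c /set_mem Uc c_max] : exists2 c, c \in unit_vectors Z &
    forall u, u \in unit_vectors Z -> dot x u <= dot x c.
  apply: compact_EVT_max (unit_vectors_compact Zsub Zint) _.
  - by have [u Uu _] := x_almost_half _ ltr01; exists u.
  - exact/continuous_subspaceT/dot_continuous.
exists c; first by split; [exact: Uc.1 | apply/enorm_eq1; exact: Uc.2].
apply/eqP; rewrite eq_le x_half //=; apply/ler_addgt0Pr => e e_gt0.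
have [u Uu xu] := x_almost_half _ e_gt0.
by have := c_max u (mem_set Uu); lra.
Qed.
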